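(* Let $n\ge2$, let $X_1,\dots,X_n$ be infinite dimensional Hilbert spaces and $D_k\in\mathcal{B}(X_k)$. Then for every $A\in\mathcal{B}_n$, $$\bigcup_{k=1}^n\sigma_r(D_k)=\sigma_r(T_n^d(A))\cup\Delta,\qquad \Delta=\bigcup_{k=1}^{n-1}\Big\{\lambda\in\sigma_r(D_k):\ \beta(D_k-\lambda)\le\sum_{s=k+1}^{n}\alpha(D_s-\lambda)\Big\}.$$ In particular, if $\Delta=\emptyset$ then $\bigcup_{k=1}^n\sigma_r(D_k)=\sigma_r(T_n^d(A))$ for every $A\in\mathcal{B}_n$.
   Context: For a bounded operator $T$, $\alpha(T)=\dim\mathcal{N}(T)$, $\beta(T)=\operatorname{codim}\mathcal{R}(T)$, values in $\{0,1,\dots\}\cup\{\infty\}$, sums and comparisons taken in this extended set. $T$ is right invertible if $\beta(T)=0$ and $\mathcal{N}(T)$ is complemented; $\sigma_r(T)=\{\lambda\in\mathbb{C}:\lambda-T$ not right invertible$\}$. $\mathcal{B}_n$ is the set of tuples $A=(A_{ij})_{1\le i<j\le n}$, $A_{ij}\in\mathcal{B}(X_j,X_i)$; $T_n^d(A)$ is the upper triangular operator matrix on $X_1\oplus\cdots\oplus X_n$ with diagonal $D_1,\dots,D_n$, entries $A_{ij}$ above the diagonal and zeros below. *)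

From HB Require Import structures.
From mathcomp Require Import all_boot all_order all_algebra.
From mathcomp Require Import boolp classical_sets reals.
From mathcomp.real_closed Require Import complex.

Set Implicit Arguments.
Unset Strict Implicit.
Unset Printing Implicit Defensive.

Import Order.TTheory GRing.Theory Num.Theory.
Local Open Scope ring_scope.

(* Extended naturals {0,1,...} U {oo}: [Some k] is k, [None] is oo.    *)
Definition enat := option nat.
Definition eadd (a b : enat) : enat :=
  match a, b with Some x, Some y => Some (x + y)%N | _, _ => None end.
Definition ele (a b : enat) : Prop :=
  match a, b with
  | _, None => True
  | None, Some _ => False
  | Some x, Some y => (x <= y)%N
  end.

(* The (possibly infinite) value determined by a family of properties
   "the quantity is >= k": the sup of the k with [ge k]. *)
Definition enat_of (ge : nat -> Prop) : enat :=
  match pselect (forall k, ge k) with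
  | left _ => None
  | right h =>
      Some (@ex_minn (fun k => `[< ~ ge k >])
              (let: ex_intro k hk := (proj2 (existsNP ge) h)
               in ex_intro _ k (asboolT hk))).-1
  end.

Section LinAlg.
Variables (R : realType) (V : lmodType R[i]).

(* k vectors linearly independent modulo the subspace (set) M;
   with M = [set 0] this is plain linear independence. *)
Definition indep_mod (M : set V) (k : nat) (v : 'I_k -> V) : Prop :=
  forall c : 'I_k -> R[i], M (\sum_(i < k) c i *: v i) -> forall i, c i = 0.

Definition dim_ge (N : set V) (k : nat) : Prop :=
  exists v : 'I_k -> V, (forall i, N (v i)) /\ indep_mod [set 0] v.
Definition edim (N : set V) : enat := enat_of (dim_ge N).

Definition codim_ge (M : set V) (k : nat) : Prop :=
  exists v : 'I_k -> V, indep_mod M v.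
Definition ecodim (M : set V) : enat := enat_of (codim_ge M).

Definition subspace (M : set V) : Prop :=
  M 0 /\ forall (a : R[i]) x y, M x -> M y -> M (a *: x + y).

Definition cvg_norm (nrm : V -> R) (u : nat -> V) (l : V) : Prop :=
  forall e : R, 0 < e -> exists N : nat, forall m, (N <= m)%N -> nrm (u m - l) < e.
Definition cauchy_norm (nrm : V -> R) (u : nat -> V) : Prop :=
  forall e : R, 0 < e -> exists N : nat,
    forall m p, (N <= m)%N -> (N <= p)%N -> nrm (u m - u p) < e.

Definition closed_norm (nrm : V -> R) (M : set V) : Prop :=
  forall (u : nat -> V) (l : V), (forall m, M (u m)) -> cvg_norm nrm u l -> M l.

Definition complemented (nrm : V -> R) (N : set V) : Prop :=
  exists M : set V, subspace M /\ closed_norm nrm M /\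
    (forall x, N x -> M x -> x = 0) /\
    (forall x, exists y z, N y /\ M z /\ x = y + z).
End LinAlg.

Section Ops.
Variables (R : realType) (V W : lmodType R[i]).

Definition ker (T : V -> W) : set V := [set x | T x = 0].
Definition range (T : V -> W) : set W := [set y | exists x, T x = y].

Definition alpha (T : V -> W) : enat := edim (ker T).
Definition beta (T : V -> W) : enat := ecodim (range T).

Definition linear_map (T : V -> W) : Prop :=
  forall (a : R[i]) x y, T (a *: x + y) = a *: T x + T y.

Definition bounded_op (nV : V -> R) (nW : W -> R) (T : V -> W) : Prop :=
  linear_map T /\ exists K : R, forall x, nW (T x) <= K * nV x.
End Ops.

Section RightSpec.
Variables (R : realType) (V : lmodType R[i]).

Definition right_invertible (nrm : V -> R) (T : V -> V) : Prop :=
  beta T = Some 0%N /\ complemented nrm (ker T).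

Definition shift (l : R[i]) (T : V -> V) : V -> V := fun x => l *: x - T x.

Definition shiftm (l : R[i]) (T : V -> V) : V -> V := fun x => T x - l *: x.

Definition sigma_r (nrm : V -> R) (T : V -> V) : set R[i] :=
  [set l | ~ right_invertible nrm (shift l T)].
End RightSpec.

Record hilbert (R : realType) := Hilbert {
  hcar :> lmodType R[i];
  hip : hcar -> hcar -> R[i];
  hip_linl : forall (a : R[i]) x y z, hip (a *: x + y) z = a * hip x z + hip y z;
  hip_sym : forall x y, hip y x = (hip x y)^*;
  hip_ge0 : forall x, 0 <= hip x x;
  hip_def : forall x, hip x x = 0 -> x = 0;
  hcomplete : forall u : nat -> hcar,
    cauchy_norm (fun x => Num.sqrt (complex.Re (hip x x))) u ->
    exists l, cvg_norm (fun x => Num.sqrt (complex.Re (hip x x))) u l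
}.

Definition hnorm (R : realType) (H : hilbert R) (x : H) : R :=
  Num.sqrt (complex.Re (hip x x)).

Definition infinite_dim (R : realType) (H : hilbert R) : Prop :=
  forall k, dim_ge [set: (H : lmodType R[i])] k.

Section DSum.
Variables (R : realType) (n : nat) (X : 'I_n -> hilbert R).

Definition dsum : Type := forall i : 'I_n, (X i : lmodType R[i]).

HB.instance Definition _ := Choice.copy dsum (forall i : 'I_n, (X i : lmodType R[i])).


Definition ds_zero : dsum := fun i => 0.
Definition ds_opp (x : dsum) : dsum := fun i => - x i.
Definition ds_add (x y : dsum) : dsum := fun i => x i + y i.
Definition ds_scale (a : R[i]) (x : dsum) : dsum := fun i => a *: x i.

Lemma ds_addA : associative ds_add.
Proof. by move=> x y z; apply: functional_extensionality_dep => i; rewrite /ds_add addrA. Qed.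
Lemma ds_addC : commutative ds_add.
Proof. by move=> x y; apply: functional_extensionality_dep => i; rewrite /ds_add addrC. Qed.
Lemma ds_add0 : left_id ds_zero ds_add.
Proof. by move=> x; apply: functional_extensionality_dep => i; rewrite /ds_add add0r. Qed.
Lemma ds_addN : left_inverse ds_zero ds_opp ds_add.
Proof. by move=> x; apply: functional_extensionality_dep => i; rewrite /ds_add addNr. Qed.

HB.instance Definition _ := GRing.isZmodule.Build dsum ds_addA ds_addC ds_add0 ds_addN.

Lemma ds_scaleA a b (v : dsum) : ds_scale a (ds_scale b v) = ds_scale (a * b) v.
Proof. by apply: functional_extensionality_dep => i; rewrite /ds_scale scalerA. Qed.
Lemma ds_scale1 : left_id 1 ds_scale.
Proof. by move=> x; apply: functional_extensionality_dep => i; rewrite /ds_scale scale1r. Qed.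
Lemma ds_scaleDr : right_distributive ds_scale +%R.
Proof. by move=> a x y; apply: functional_extensionality_dep => i; rewrite /ds_scale scalerDr. Qed.
Lemma ds_scaleDl (v : dsum) : {morph ds_scale^~ v : a b / a + b}.
Proof. by move=> a b; apply: functional_extensionality_dep => i; rewrite /ds_scale scalerDl. Qed.

HB.instance Definition _ :=
  GRing.Zmodule_isLmodule.Build R[i] dsum ds_scaleA ds_scale1 ds_scaleDr ds_scaleDl.

Definition ds_norm (x : dsum) : R :=
  Num.sqrt (\sum_(i < n) hnorm (x i) ^+ 2).

Definition Tnd (D : forall k : 'I_n, X k -> X k)
    (A : forall i j : 'I_n, X j -> X i) : dsum -> dsum :=
  fun x i => D i (x i) + \sum_(j < n | (i < j)%N) A i j (x j).
End DSum.

From Pilot Require Import Defs.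
From HB Require Import structures.
From mathcomp Require Import all_boot all_order all_algebra.
From mathcomp Require Import boolp classical_sets reals.
From mathcomp.real_closed Require Import complex.
From mathcomp Require Import ring lra zify.

(* If every [D_k - l] is right invertible, [T - l] is solved by back
   substitution from the last row upwards, and the product of the chosen
   complements of the kernels complements its kernel; so [sigma_r(T)] lies in
   the union of the [sigma_r(D_k)].  Conversely let [l] be in [sigma_r(D_k)] but
   not in [sigma_r(T)], so [T - l] is onto.  On a Hilbert space, ontoness of a
   bounded operator already gives right invertibility (the kernel is closed,
   hence orthogonally complemented), so [D_k - l] is not onto; the last row of
   [T - l] is [D_n - l], hence [k < n].  Lifting [m] vectors independent modulo
   [R(D_k - l)] through [T - l] and cutting off the coordinates [<= k] yields [m]
   independent vectors annihilated by the rows below [k]; peeling off one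
   coordinate at a time, each step loses at most [alpha(D_s - l)] dimensions, so
   [m <= sum_(s > k) alpha(D_s - l)], i.e. [l] is in [Delta]. *)

Set Implicit Arguments.
Unset Strict Implicit.
Unset Printing Implicit Defensive.
Import Order.TTheory GRing.Theory Num.Theory.
Local Open Scope complex_scope.
Local Open Scope ring_scope.
Local Open Scope classical_set_scope.

(** * Dimension counts *)

Section ExtendedNat.
Variable ge : nat -> Prop.
Hypothesis ge_down : forall {k j}, (j <= k)%N -> ge k -> ge j.

Lemma enat_ofP : ge 0%N ->
  (enat_of ge = None /\ forall k, ge k) \/
  (exists a, enat_of ge = Some a /\ ge a /\ ~ ge a.+1).
Proof.
move=> g0; rewrite /enat_of; case: pselect => [h|h]; first by left.
right; case: ex_minnP => m /asboolP hm hmin; exists m.-1; split => //.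
have m0 : (0 < m)%N by case: m hm {hmin} => // /(_ g0).
rewrite prednK //; split => //.
apply/not_notP => hn; have := hmin m.-1 (asboolT hn).
by rewrite -ltnS prednK // ltnn.
Qed.

Lemma enat_of_Some b : ge b -> ~ ge b.+1 -> enat_of ge = Some b.
Proof.
move=> gb ngb; have g0 : ge 0%N := ge_down (leq0n b) gb.
case: (enat_ofP g0) => [[_ /(_ b.+1)]//|[a [-> [ga nga]]]].
congr Some; apply/eqP; rewrite eqn_leq; apply/andP; split.
- by rewrite leqNgt; apply/negP => h; exact: ngb (ge_down h ga).
- by rewrite leqNgt; apply/negP => h; exact: nga (ge_down h gb).
Qed.

Lemma enat_of_le b : ~ ge b.+1 -> ele (enat_of ge) (Some b).
Proof.
move=> ngb; have [g0|g0] := pselect (ge 0%N); last first.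
  rewrite /enat_of; case: pselect => [h|h]; first by case: g0.
  case: ex_minnP => m _ hmin; have := hmin 0%N (asboolT g0).
  by rewrite leqn0 => /eqP ->.
case: (enat_ofP g0) => [[_ /(_ b.+1)]//|[a [-> [ga nga]]]] /=.
by rewrite leqNgt; apply/negP => h; exact: ngb (ge_down h ga).
Qed.

Lemma enat_of_Some_not_ge b : enat_of ge = Some b -> ~ ge b.+1.
Proof.
move=> hb; have [g0|g0] := pselect (ge 0%N); last by move=> /(ge_down (leq0n _)).
case: (enat_ofP g0) => [[hN _]|[a [ha [_ nga]]]]; first by rewrite hN in hb.
by move: hb; rewrite ha => -[<-].
Qed.

End ExtendedNat.

Lemma big_eadd_None (I : eqType) (r : seq I) (P : pred I) (F : I -> enat) s :
  s \in r -> P s -> F s = None -> \big[eadd/Some 0%N]_(i <- r | P i) F i = None.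
Proof.
elim: r => // x r IH; rewrite in_cons big_cons => /orP [/eqP <-|hr] hP hF.
  by rewrite hP hF.
by case: (P x); rewrite ?IH //; case: (F x).
Qed.

Lemma big_eadd_Some (I : Type) (r : seq I) (P : pred I) (F : I -> enat) (a : I -> nat) :
  (forall i, P i -> F i = Some (a i)) ->
  \big[eadd/Some 0%N]_(i <- r | P i) F i = Some (\sum_(i <- r | P i) a i)%N.
Proof. by move=> h; elim/big_rec2: _ => // i y1 y2 hP ->; rewrite h. Qed.

Section Subspace.
Variables (R : realType) (V : lmodType R[i]) (M : set V).
Hypothesis subM : subspace M.

Lemma subspace0 : M 0.
Proof. by case: subM. Qed.

Lemma subspaceZD a x y : M x -> M y -> M (a *: x + y).
Proof. by case: subM => _; apply. Qed.

Lemma subspaceZ a x : M x -> M (a *: x).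
Proof. by move=> h; rewrite -[_ *: _]addr0; apply: subspaceZD h subspace0. Qed.

Lemma subspaceD x y : M x -> M y -> M (x + y).
Proof. by move=> hx hy; rewrite -[x]scale1r; exact: subspaceZD. Qed.

Lemma subspace_sum k (c : 'I_k -> R[i]) (v : 'I_k -> V) :
  (forall i, M (v i)) -> M (\sum_(i < k) c i *: v i).
Proof. by move=> hv; elim/big_rec: _ => [|i y _ hy]; [exact: subspace0 | exact: subspaceZD]. Qed.

End Subspace.

Section LinearMap.
Variables (R : realType) (V W : lmodType R[i]) (T : V -> W).
Hypothesis linT : linear_map T.

Lemma linear_map0 : T 0 = 0.
Proof.
have := linT 1 0 0; rewrite scale1r addr0 scale1r => h.
by apply/eqP; rewrite -(subrr (T 0)) {2}h addrK eqxx.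
Qed.

Lemma linear_mapD x y : T (x + y) = T x + T y.
Proof. by have := linT 1 x y; rewrite !scale1r. Qed.

Lemma linear_mapZ a x : T (a *: x) = a *: T x.
Proof. by have := linT a x 0; rewrite !addr0 linear_map0 addr0. Qed.

Lemma linear_mapB x y : T (x - y) = T x - T y.
Proof. by rewrite linear_mapD -scaleN1r linear_mapZ scaleN1r. Qed.

Lemma linear_map_sum k (c : 'I_k -> R[i]) (v : 'I_k -> V) :
  T (\sum_(i < k) c i *: v i) = \sum_(i < k) c i *: T (v i).
Proof.
elim/big_rec2: _ => [|i y1 y2 _ <-]; first exact: linear_map0.
by rewrite linear_mapD linear_mapZ.
Qed.

Lemma ker_subspace : subspace (ker T).
Proof.
split; first exact: linear_map0.
by move=> a x y hx hy; rewrite /ker /= linT hx hy scaler0 addr0.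
Qed.

End LinearMap.

Section Dimension.
Variables (R : realType) (V : lmodType R[i]).

Lemma sum_extend k j (hjk : (j <= k)%N) (c : 'I_j -> R[i]) (v : 'I_k -> V) :
  let c' := fun i : 'I_k => oapp c 0 (insub (val i) : option 'I_j) in
  \sum_(i < k) c' i *: v i = \sum_(i < j) c i *: v (widen_ord hjk i) /\
  forall i, c' (widen_ord hjk i) = c i.
Proof.
move=> c'; have hc i : c' (widen_ord hjk i) = c i.
  rewrite /c'; case: insubP => [u _ hu|]; last by rewrite /= ltn_ord.
  by congr c; apply: val_inj.
split => //.
rewrite (bigID (fun i : 'I_k => (i < j)%N)) /= big_ord_narrow [X in _ + X]big1 ?addr0.
  by apply: eq_bigr => i _; rewrite hc.
move=> i hi; rewrite /c'; case: insubP => [u hu _|_]; last by rewrite /= scale0r.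
by rewrite hu in hi.
Qed.

Lemma indep_mod_widen (M : set V) k j (hjk : (j <= k)%N) (v : 'I_k -> V) :
  indep_mod M v -> indep_mod M (fun i : 'I_j => v (widen_ord hjk i)).
Proof.
move=> hv c hc i; have [e1 e2] := sum_extend hjk c v.
have := hv (fun i : 'I_k => oapp c 0 (insub (val i) : option 'I_j)).
by rewrite e1 => /(_ hc (widen_ord hjk i)); rewrite e2.
Qed.

Lemma codim_ge_le (M : set V) k j : (j <= k)%N -> codim_ge M k -> codim_ge M j.
Proof. by move=> hjk [v hv]; exists (fun i => v (widen_ord hjk i)); exact: indep_mod_widen. Qed.

Lemma dim_ge_le (N : set V) k j : (j <= k)%N -> dim_ge N k -> dim_ge N j.
Proof.
move=> hjk [v [hN hv]].
by exists (fun i => v (widen_ord hjk i)); split => //; exact: indep_mod_widen.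
Qed.

Lemma dim_ge_sub (N1 N2 : set V) m : N1 `<=` N2 -> dim_ge N1 m -> dim_ge N2 m.
Proof. by move=> h [v [hv hi]]; exists v; split => // i; apply: h. Qed.

Lemma dim_ge0 (N : set V) : dim_ge N 0.
Proof. by exists (fun _ => 0); split => [[]|? _ []]. Qed.

Lemma dim_geS_nonzero (N : set V) m : dim_ge N m.+1 -> exists2 x, N x & x != 0.
Proof.
move=> [v [hN hv]]; exists (v ord0) => //; apply/eqP => v0.
have := hv (fun i => (i == ord0)%:R); rewrite (bigD1 ord0) //= big1 => [|i /negbTE ->].
  by rewrite v0 scaler0 addr0 => /(_ erefl ord0); rewrite eqxx => /eqP; rewrite oner_eq0.
by rewrite scale0r.
Qed.

End Dimension.

Section DefectNumbers.
Variables (R : realType) (V W : lmodType R[i]) (T : V -> W).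

Lemma alpha_Some_dim a : alpha T = Some a -> ~ dim_ge (ker T) a.+1.
Proof. exact: (enat_of_Some_not_ge (@dim_ge_le _ _ (ker T))). Qed.

Lemma beta_eq0_surj : linear_map T -> beta T = Some 0%N -> forall y, exists x, T x = y.
Proof.
move=> linT /(enat_of_Some_not_ge (@codim_ge_le _ _ (Defs.range T))) hb y.
apply/not_notP => hy; apply: hb.
exists (fun _ => y) => c hc i; rewrite big_ord1 in hc.
have [c0|c0] := eqVneq (c ord0) 0; first by rewrite (ord1 i).
case: hy; case: hc => x hx.
by exists ((c ord0)^-1 *: x); rewrite linear_mapZ // hx scalerA mulVf // scale1r.
Qed.

Lemma surj_beta_eq0 : (forall y, exists x, T x = y) -> beta T = Some 0%N.
Proof.
move=> hs; apply: enat_of_Some; first exact: (@codim_ge_le _ _ _).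
  by exists (fun _ => 0) => ? _ [].
move=> [v hv]; have [x hx] := hs (\sum_(i < 1) 1 *: v i).
by have /(_ ord0) /eqP := hv (fun _ => 1) (ex_intro _ x hx); rewrite oner_eq0.
Qed.

End DefectNumbers.

Section RankNullity.
Variables (R : realType) (W : lmodType R[i]) (m : nat) (w : 'I_m -> W).

Definition indep_on (I : {set 'I_m}) : Prop :=
  forall c : 'I_m -> R[i], (forall i, i \notin I -> c i = 0) ->
    \sum_(i < m) c i *: w i = 0 -> forall i, c i = 0.

Lemma indep_on_dim_ge (Q : set W) (I : {set 'I_m}) :
  (forall i, i \in I -> Q (w i)) -> indep_on I -> dim_ge Q #|I|.
Proof.
move=> hQ hI; have [->|/card_gt0P [x0 hx0]] := posnP #|I|; first exact: dim_ge0.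
exists (fun t => w (enum_val t)); split; first by move=> t; apply/hQ/enum_valP.
move=> c hc t.
pose c' i := if i \in I then c (enum_rank_in hx0 i) else 0.
have e : \sum_(i < m) c' i *: w i = \sum_(t < #|I|) c t *: w (enum_val t).
  rewrite (bigID (mem I)) /= [X in _ + X]big1 ?addr0; last first.
    by move=> i /negbTE hi; rewrite /c' hi scale0r.
  by rewrite big_enum_val /=; apply: eq_bigr => s _; rewrite /c' enum_valP enum_valK_in.
have := hI c'; rewrite e => /(_ _ hc (enum_val t)).
by rewrite /c' enum_valP enum_valK_in //; apply => i /negbTE hi; rewrite /c' hi.
Qed.

Lemma exists_max_indep_on : exists I, indep_on I /\ forall j, j \notin I -> ~ indep_on (j |: I).
Proof.
pose pr k := `[< exists I, indep_on I /\ #|I| = k >].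
have ex0 : exists k, pr k.
  exists 0%N; apply/asboolP; exists finset.set0; rewrite cards0; split => // c hc _ i.
  by apply: hc; rewrite finset.in_set0.
have ub k : pr k -> (k <= m)%N.
  by move=> /asboolP [I [_ <-]]; apply: leq_trans (max_card _) _; rewrite card_ord.
case: (ex_maxnP ex0 ub) => k /asboolP [I [hI hk]] hmax; exists I; split => // j hj hjI.
have := hmax #|j |: I| (asboolT (ex_intro _ (j |: I) (conj hjI erefl))).
by rewrite cardsU1 hj hk ltnn.
Qed.

Lemma dependent_coef (I : {set 'I_m}) j : indep_on I -> j \notin I -> ~ indep_on (j |: I) ->
  exists c : 'I_m -> R[i], [/\ forall i, i \notin j |: I -> c i = 0,
                              \sum_(i < m) c i *: w i = 0 & c j = 1].
Proof.
move=> hI hj hjI; apply/not_notP => hn; apply: hjI => c hc hs.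
have [cj0|cj0] := eqVneq (c j) 0.
  apply: hI => // i hi; have [->//|ij] := eqVneq i j.
  by apply: hc; rewrite in_setU1 negb_or ij hi.
case: hn; exists (fun i => (c j)^-1 * c i); split; last by rewrite mulVf.
  by move=> i hi; rewrite (hc i hi) mulr0.
under eq_bigr do rewrite -scalerA.
by rewrite -scaler_sumr hs scaler0.
Qed.

End RankNullity.

(* Rank-nullity, through a maximal independent subfamily of the [P (v i)]. *)
Lemma dim_ge_meet_ker (R : realType) (V W : lmodType R[i]) (S : set V) (Q : set W)
    (P : V -> W) a m :
  subspace S -> linear_map P -> (forall x, S x -> Q (P x)) -> ~ dim_ge Q a.+1 ->
  dim_ge S m -> dim_ge (S `&` ker P) (m - a).
Proof.
move=> subS linP hQ nQ [v [hS hv]].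
pose w i := P (v i).
have [I [hI hmax]] := exists_max_indep_on w.
have cardI : (#|I| <= a)%N.
  rewrite leqNgt; apply/negP => h; apply/nQ/(dim_ge_le h).
  by apply: (indep_on_dim_ge (w := w)) => // i _; apply: hQ.
have hcoef j : exists c : 'I_m -> R[i], j \notin I -> [/\ forall i, i \notin j |: I -> c i = 0,
                              \sum_(i < m) c i *: w i = 0 & c j = 1].
  have [jI|jI] := boolP (j \in I); first by exists (fun _ => 0).
  by have [c hc] := dependent_coef hI jI (hmax j jI); exists c.
have [cc hcc] := choice hcoef.
pose u j := \sum_(i < m) cc j i *: v i.
have uS j : j \in ~: I -> (S `&` ker P) (u j).
  rewrite finset.in_setC => hj; split; first exact: subspace_sum.
  by rewrite /ker /= /u linear_map_sum //; case: (hcc j hj).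
have us : indep_on u (~: I).
  move=> e he hsum j0.
  have hsum' : \sum_(i < m) (\sum_(j < m) e j * cc j i) *: v i = 0.
    rewrite -[RHS]hsum /u; under [RHS]eq_bigr do rewrite scaler_sumr.
    rewrite exchange_big /=; apply: eq_bigr => i _; rewrite scaler_suml.
    by apply: eq_bigr => j _; rewrite scalerA.
  have hz := hv _ hsum' j0.
  have [j0I|j0I] := boolP (j0 \in I); first by apply: he; rewrite finset.in_setC j0I.
  rewrite (bigD1 j0) //= big1 ?addr0 in hz.
    by have [_ _ h1] := hcc j0 j0I; rewrite h1 mulr1 in hz.
  move=> j hj; have [jI|jI] := boolP (j \in I); first by rewrite he ?mul0r // finset.in_setC jI.
  by have [h0 _ _] := hcc j jI; rewrite h0 ?mulr0 // in_setU1 negb_or eq_sym hj j0I.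
apply: (@dim_ge_le _ _ _ #|~: I|); last exact: indep_on_dim_ge uS us.
by move: cardI (cardsC I); rewrite card_ord; move: #|I| #|~: I| => x y; lia.
Qed.

(** * Hilbert spaces *)

Section RealFacts.
Variable R : realType.

Lemma sqrt_le_sqr (a b : R) : 0 <= b -> a <= b ^+ 2 -> Num.sqrt a <= b.
Proof.
move=> hb hab; have := ler_wsqrtr hab; rewrite sqrtr_sqr ger0_norm //.
Qed.

Lemma sqrt_lt_sqr (a b : R) : 0 < b -> a < b ^+ 2 -> Num.sqrt a < b.
Proof.
move=> hb hab; have h : 0 < b ^+ 2 by rewrite exprn_gt0.
by rewrite -(ger0_norm (ltW hb)) -sqrtr_sqr ltr_sqrt.
Qed.

Lemma invS_lt_eventually (e : R) : 0 < e ->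
  exists K : nat, forall m, (K <= m)%N -> (m.+1%:R : R)^-1 < e.
Proof.
move=> he; exists (Num.Def.archi_bound e^-1) => m hm.
have hi : 0 < e^-1 by rewrite invr_gt0.
have hK : (Num.Def.archi_bound e^-1)%:R <= (m.+1%:R : R).
  by rewrite ler_nat; apply: leq_trans hm _.
rewrite -(invrK e) ltf_pV2 ?posrE ?invr_gt0 ?ltr0Sn //.
exact: lt_le_trans (archi_boundP (ltW hi)) hK.
Qed.

Lemma norm_lt_all_eq0 (r : R) : (forall e, 0 < e -> `|r| < e) -> r = 0.
Proof.
move=> h; apply/eqP; apply/negPn/negP => hr.
by have := h `|r|; rewrite normr_gt0 hr ltxx => /(_ isT).
Qed.

Lemma complexRe_conj (z : R[i]) : complex.Re (z^*) = complex.Re z.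
Proof. by case: z. Qed.

Lemma complexRe_add (z w : R[i]) : complex.Re (z + w) = complex.Re z + complex.Re w.
Proof. by case: z; case: w. Qed.

Lemma complexRe_opp (z : R[i]) : complex.Re (- z) = - complex.Re z.
Proof. by case: z. Qed.

Lemma complexRe_realM (t : R) (z : R[i]) : complex.Re (t%:C * z) = t * complex.Re z.
Proof. by case: z => a b /=; rewrite mul0r subr0. Qed.

Lemma conj_real (t : R) : (t%:C : R[i])^* = t%:C.
Proof. by apply/eqP; rewrite eq_complex /= oppr0 !eqxx. Qed.

Lemma complexRe_iM_eq0 (z : R[i]) : complex.Re z = 0 -> complex.Re ('i * z) = 0 -> z = 0.
Proof.
case: z => a b /= -> ; rewrite !mul0r !mul1r => h.
by have -> : b = 0 by lra.
Qed.

End RealFacts.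

Section InnerProduct.
Variables (R : realType) (H : hilbert R).
Local Notation ip := (@hip R H).
Local Notation nrm := (@hnorm R H).

Definition sqnorm (x : H) : R := complex.Re (ip x x).
Definition reip (x y : H) : R := complex.Re (ip x y).

Lemma hip0l z : ip 0 z = 0.
Proof.
have := hip_linl 1 (0 : H) 0 z; rewrite scale1r addr0 mul1r => h.
by apply/eqP; rewrite -(subrr (ip 0 z)) {2}h addrK eqxx.
Qed.

Lemma hipDl x y z : ip (x + y) z = ip x z + ip y z.
Proof. by have := hip_linl 1 x y z; rewrite scale1r mul1r. Qed.

Lemma hipZl a x z : ip (a *: x) z = a * ip x z.
Proof. by have := hip_linl a x 0 z; rewrite addr0 hip0l addr0. Qed.

Lemma hipNl x z : ip (- x) z = - ip x z.
Proof. by rewrite -scaleN1r hipZl mulN1r. Qed.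

Lemma hip0r z : ip z 0 = 0.
Proof. by rewrite hip_sym hip0l rmorph0. Qed.

Lemma hipDr x y z : ip x (y + z) = ip x y + ip x z.
Proof. by rewrite hip_sym hipDl [ip x y]hip_sym [ip x z]hip_sym rmorphD. Qed.

Lemma hipZr a x z : ip x (a *: z) = a^* * ip x z.
Proof. by rewrite hip_sym hipZl [ip x z]hip_sym rmorphM. Qed.

Lemma hipNr x z : ip x (- z) = - ip x z.
Proof. by rewrite hip_sym hipNl [ip x z]hip_sym rmorphN. Qed.

Lemma hip_selfE x : ip x x = (sqnorm x)%:C.
Proof.
rewrite /sqnorm; have := hip_ge0 x; case: (ip x x) => a b.
by rewrite lecE /= => /andP[/eqP -> _].
Qed.

Lemma sqnorm_ge0 x : 0 <= sqnorm x.
Proof. by have := hip_ge0 x; rewrite hip_selfE ler0c. Qed.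

Lemma sqnorm_eq0 x : sqnorm x = 0 -> x = 0.
Proof. by move=> h; apply: hip_def; rewrite hip_selfE h. Qed.

Lemma reipC x y : reip x y = reip y x.
Proof. by rewrite /reip hip_sym complexRe_conj. Qed.

Lemma reipDl x y z : reip (x + y) z = reip x z + reip y z.
Proof. by rewrite /reip hipDl complexRe_add. Qed.

Lemma reipDr x y z : reip x (y + z) = reip x y + reip x z.
Proof. by rewrite /reip hipDr complexRe_add. Qed.

Lemma reipNl x z : reip (- x) z = - reip x z.
Proof. by rewrite /reip hipNl complexRe_opp. Qed.

Lemma reipNr x z : reip x (- z) = - reip x z.
Proof. by rewrite /reip hipNr complexRe_opp. Qed.

Lemma reipZl t x z : reip (t%:C *: x) z = t * reip x z.
Proof. by rewrite /reip hipZl complexRe_realM. Qed.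

Lemma reipZr t x z : reip x (t%:C *: z) = t * reip x z.
Proof. by rewrite /reip hipZr conj_real complexRe_realM. Qed.

Lemma sqnormD x y : sqnorm (x + y) = sqnorm x + sqnorm y + 2 * reip x y.
Proof. rewrite /sqnorm -!/(reip _ _) reipDl !reipDr (reipC y x); ring. Qed.

Lemma sqnormN x : sqnorm (- x) = sqnorm x.
Proof. by rewrite /sqnorm -!/(reip _ _) reipNl reipNr opprK. Qed.

Lemma sqnormB x y : sqnorm (x - y) = sqnorm x + sqnorm y - 2 * reip x y.
Proof. by rewrite sqnormD sqnormN reipNr; ring. Qed.

Lemma sqnormZ t x : sqnorm (t%:C *: x) = t ^+ 2 * sqnorm x.
Proof. by rewrite /sqnorm -!/(reip _ _) reipZl reipZr; ring. Qed.

Lemma sqnormZc (a : R[i]) x :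
  sqnorm (a *: x) = (complex.Re a ^+ 2 + complex.Im a ^+ 2) * sqnorm x.
Proof. by rewrite {1}/sqnorm hipZl hipZr hip_selfE; case: a => a b /=; ring. Qed.

(* Cauchy-Schwarz, from the nonnegativity of the quadratic [t |-> sqnorm (x + t y)]. *)
Lemma reip_sqr_le x y : reip x y ^+ 2 <= sqnorm x * sqnorm y.
Proof.
set r := reip x y.
have key t : 0 <= sqnorm x + t ^+ 2 * sqnorm y + 2 * t * r.
  by have := sqnorm_ge0 (x + t%:C *: y); rewrite sqnormD sqnormZ reipZr /r mulrA.
have hx := sqnorm_ge0 x; have hy := sqnorm_ge0 y.
have [y0|ypos] := eqVneq (sqnorm y) 0.
  rewrite y0 mulr0; have [->|rn0] := eqVneq r 0; first by rewrite expr0n.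
  have := key (- (sqnorm x + 1) / (2 * r)); rewrite y0 mulr0 addr0.
  have -> : 2 * (- (sqnorm x + 1) / (2 * r)) * r = - (sqnorm x + 1).
    by field; rewrite rn0.
  lra.
have yp : 0 < sqnorm y by rewrite lt_def ypos hy.
have := key (- r / sqnorm y).
have -> : sqnorm x + (- r / sqnorm y) ^+ 2 * sqnorm y + 2 * (- r / sqnorm y) * r
          = (sqnorm x * sqnorm y - r ^+ 2) / sqnorm y by field.
by rewrite pmulr_lge0 ?invr_gt0 // subr_ge0.
Qed.

Lemma hnorm_ge0 x : 0 <= nrm x.
Proof. exact: sqrtr_ge0. Qed.

Lemma sqr_hnorm x : nrm x ^+ 2 = sqnorm x.
Proof. by rewrite sqr_sqrtr // sqnorm_ge0. Qed.

Lemma hnorm_opp x : nrm (- x) = nrm x.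
Proof. by rewrite /hnorm -/(sqnorm _) sqnormN. Qed.

Lemma reip_le_hnorm x y : reip x y <= nrm x * nrm y.
Proof.
rewrite /hnorm -sqrtrM ?sqnorm_ge0 //; apply: le_trans (ler_norm _) _.
by rewrite -sqrtr_sqr; apply: ler_wsqrtr; exact: reip_sqr_le.
Qed.

Lemma hnorm_triangle x y : nrm (x + y) <= nrm x + nrm y.
Proof.
rewrite {1}/hnorm -/(sqnorm _); apply: sqrt_le_sqr; first by rewrite addr_ge0 ?hnorm_ge0.
by rewrite sqnormD -!sqr_hnorm; have := reip_le_hnorm x y; nra.
Qed.

Lemma hnormZ_le (a : R[i]) x :
  nrm (a *: x) <= (complex.Re a ^+ 2 + complex.Im a ^+ 2 + 1) * nrm x.
Proof.
rewrite {1}/hnorm -/(sqnorm _) sqnormZc.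
set c := _ + _; have hc : 0 <= c by rewrite addr_ge0 ?sqr_ge0.
apply: sqrt_le_sqr; first by rewrite mulr_ge0 ?hnorm_ge0 // addr_ge0.
by rewrite exprMn sqr_hnorm; have := sqnorm_ge0 x; nra.
Qed.

Lemma reip_lim_eq0 y (u : nat -> H) l :
  (forall m, reip y (u m) = 0) -> cvg_norm nrm u l -> reip y l = 0.
Proof.
move=> hu hc; apply: norm_lt_all_eq0 => e he.
have hy := hnorm_ge0 y.
have hd : 0 < e / (nrm y + 1) by rewrite divr_gt0 // ltr_pwDr.
have [K hK] := hc _ hd; have hm := hK K (leqnn K).
have eq1 : reip y (u K - l) = - reip y l by rewrite reipDr reipNr hu add0r.
have h1 := reip_le_hnorm y (u K - l).
have h2 := reip_le_hnorm (- y) (u K - l).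
rewrite reipNl eq1 opprK hnorm_opp in h2; rewrite eq1 in h1.
have h3 : nrm y * nrm (u K - l) <= nrm y * (e / (nrm y + 1)).
  by rewrite ler_wpM2l // ltW.
have h4 : nrm y * (e / (nrm y + 1)) < e.
  by rewrite mulrA ltr_pdivrMr ?ltr_pwDr //; nra.
by rewrite ltr_norml; apply/andP; split; lra.
Qed.

End InnerProduct.

Section Projection.
Variables (R : realType) (H : hilbert R) (N : set H).
Hypotheses (subN : subspace N) (clN : closed_norm (@hnorm R H) N).
Local Notation nrm := (@hnorm R H).

Section NearestPoint.
Variable x : H.

Definition dists : set R := [set r | exists2 y, N y & r = nrm (x - y)].
Definition dist_to : R := inf dists.

Lemma has_inf_dists : has_inf dists.
Proof.
split; first by exists (nrm (x - 0)), 0 => //; exact: subspace0.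
by exists 0 => r [y _ ->]; exact: hnorm_ge0.
Qed.

Lemma dist_to_ge0 : 0 <= dist_to.
Proof.
apply: lb_le_inf; first by case: has_inf_dists.
by move=> r [y _ ->]; exact: hnorm_ge0.
Qed.

Lemma dist_to_le y : N y -> dist_to <= nrm (x - y).
Proof. by move=> hy; apply: ge_inf; [case: has_inf_dists | exists y]. Qed.

Lemma dist_to_approx e : 0 < e -> exists2 y, N y & nrm (x - y) < dist_to + e.
Proof. by move=> he; have [_ [y hy ->] hr] := inf_adherent he has_inf_dists; exists y. Qed.

(* Parallelogram law applied to [x - y], [x - z] and their midpoint. *)
Lemma sqnorm_near_pair y z e1 e2 : N y -> N z -> 0 <= e1 -> 0 <= e2 ->
  sqnorm (x - y) <= (dist_to + e1) ^+ 2 -> sqnorm (x - z) <= (dist_to + e2) ^+ 2 ->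
  sqnorm (y - z) <= 4 * dist_to * (e1 + e2) + 2 * e1 ^+ 2 + 2 * e2 ^+ 2.
Proof.
move=> hy hz he1 he2 hxy hxz.
pose mid := ((2 : R)^-1)%:C *: (y + z).
have hmid : N mid by apply: (subspaceZ subN); exact: subspaceD.
have hsum : (x - y) + (x - z) = (2 : R)%:C *: (x - mid).
  rewrite /mid scalerBr scalerA -rmorphM mulfV ?pnatr_eq0 // scale1r.
  rewrite rmorph_nat mulr2n scalerDl scale1r opprD !addrA; congr (_ - _).
  by rewrite addrAC.
have hdiff : (x - z) - (x - y) = y - z by rewrite opprB addrC addrA subrK.
have Q := sqnormD (x - y) (x - z); have Q2 := sqnormB (x - z) (x - y).
rewrite hsum sqnormZ in Q; rewrite hdiff reipC in Q2.
have d0 := dist_to_ge0.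
have dm : dist_to ^+ 2 <= sqnorm (x - mid).
  by rewrite -sqr_hnorm; have := dist_to_le hmid; nra.
nra.
Qed.

Lemma minimizing_seq_cauchy (f : nat -> H) :
  (forall m, N (f m) /\ nrm (x - f m) < dist_to + m.+1%:R^-1) -> cauchy_norm nrm f.
Proof.
move=> hf eps heps; pose e m : R := m.+1%:R^-1.
have d0 := dist_to_ge0.
have e0 m : 0 < e m by rewrite invr_gt0 ltr0Sn.
have e1 m : e m <= 1 by rewrite invf_le1 ?ltr0Sn // ler1n.
have sqf m : sqnorm (x - f m) <= (dist_to + e m) ^+ 2.
  have [_ h] := hf m; rewrite -/(e m) in h.
  by have := hnorm_ge0 (x - f m); have := e0 m; rewrite -sqr_hnorm; nra.
have hc : 0 < 8 * dist_to + 4 by lra.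
have [K hK] := invS_lt_eventually (divr_gt0 (exprn_gt0 2 heps) hc).
have small m : (K <= m)%N -> (8 * dist_to + 4) * e m < eps ^+ 2.
  by move=> hm; rewrite mulrC -ltr_pdivlMr //; exact: hK.
exists K => m p hm hp; have := small m hm; have := small p hp.
have := sqnorm_near_pair (hf m).1 (hf p).1 (ltW (e0 m)) (ltW (e0 p)) (sqf m) (sqf p).
move=> hq hsp hsm; rewrite /hnorm -/(sqnorm _); apply: sqrt_lt_sqr => //.
by have := e0 m; have := e0 p; have := e1 m; have := e1 p; nra.
Qed.

Lemma exists_nearest : exists2 y0, N y0 & forall y, N y -> sqnorm (x - y0) <= sqnorm (x - y).
Proof.
have approx m : exists y, N y /\ nrm (x - y) < dist_to + m.+1%:R^-1.
  have he : 0 < (m.+1%:R : R)^-1 by rewrite invr_gt0 ltr0Sn.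
  by have [y hy hxy] := dist_to_approx he; exists y.
have [f hf] := choice approx.
have [l hl] := hcomplete (minimizing_seq_cauchy hf).
have Nl : N l by apply: (clN (u := f)) => // m; case: (hf m).
exists l => // y hy.
have hle : nrm (x - l) <= dist_to.
  apply/ler_addgt0Pr => eps heps; have heps2 : 0 < eps / 2 by rewrite divr_gt0.
  have [K1 hK1] := hl _ heps2; have [K2 hK2] := invS_lt_eventually heps2.
  pose m := maxn K1 K2.
  have h1 : nrm (f m - l) < eps / 2 := hK1 _ (leq_maxl K1 K2).
  have h2 := hK2 _ (leq_maxr K1 K2); have [_ h3] := hf m.
  have := hnorm_triangle (x - f m) (f m - l); rewrite addrA subrK.
  by move: h2 h3; rewrite -/m; move: (m.+1%:R^-1) => v; lra.
by have := dist_to_le hy; have := hnorm_ge0 (x - l); rewrite -!sqr_hnorm; nra.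
Qed.

End NearestPoint.

Definition orth : set H := [set z | forall y, N y -> hip y z = 0].

Lemma orthP z : (forall y, N y -> reip y z = 0) -> orth z.
Proof.
move=> h y hy; apply: complexRe_iM_eq0; first exact: h.
by rewrite -hipZl; exact: h (subspaceZ subN _ hy).
Qed.

(* [t |-> sqnorm (x - y0 - t z)] is minimal at [t = 0], so its linear
   coefficient [reip (x - y0) z] vanishes. *)
Lemma nearest_orth x y0 : N y0 ->
  (forall y, N y -> sqnorm (x - y0) <= sqnorm (x - y)) -> orth (x - y0).
Proof.
move=> hy0 hmin; apply: orthP => z hz; rewrite reipC; set r := reip _ z.
have key t : 0 <= t ^+ 2 * sqnorm z - 2 * t * r.
  have := hmin (t%:C *: z + y0) (subspaceZD subN _ hz hy0).
  have -> : x - (t%:C *: z + y0) = (x - y0) + (- t)%:C *: z.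
    by rewrite rmorphN scaleNr opprD addrCA [RHS]addrC.
  by rewrite [sqnorm (_ + _ *: _)]sqnormD sqnormZ reipZr -/r; lra.
have hq := sqnorm_ge0 z; set s := sqnorm z + 1.
have hs : 0 < s by rewrite /s; lra.
have := key (r / s); rewrite -[X in 0 <= X](@mulKf _ (s ^+ 2)) ?sqrf_eq0 ?lt0r_neq0 //.
rewrite pmulr_rge0 ?invr_gt0 ?exprn_gt0 //.
have -> : s ^+ 2 * ((r / s) ^+ 2 * sqnorm z - 2 * (r / s) * r) = r ^+ 2 * (sqnorm z - 2 * s).
  by field; rewrite lt0r_neq0.
rewrite /s => h; apply/eqP; rewrite -sqrf_eq0 eq_le sqr_ge0 andbT; nra.
Qed.

Theorem closed_subspace_complemented : complemented nrm N.
Proof.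
exists orth; split; [split|split; [|split]].
- by move=> y _; rewrite hip0r.
- by move=> a u v hu hv y hy; rewrite hipDr hipZr hu // hv // mulr0 addr0.
- move=> u l hu hc; apply: orthP => y hy.
  by apply: (reip_lim_eq0 (u := u)) => // m; rewrite /reip hu.
- by move=> u hu hu'; apply: hip_def; apply: hu'.
- move=> x; have [y0 hy0 hmin] := exists_nearest x.
  exists y0, (x - y0); split => //; split; first exact: nearest_orth.
  by rewrite addrC subrK.
Qed.

End Projection.

Section Shift.
Variables (R : realType) (V : lmodType R[i]) (T : V -> V) (l : R[i]).

Lemma shiftE x : shift l T x = - shiftm l T x.
Proof. by rewrite /shift /shiftm opprB. Qed.

Lemma linear_shiftm : linear_map T -> linear_map (shiftm l T).
Proof.
move=> linT a x y; rewrite /shiftm linT scalerDr scalerBr opprD addrACA.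
by rewrite !scalerA mulrC.
Qed.

Lemma linear_shift : linear_map T -> linear_map (shift l T).
Proof. by move=> linT a x y; rewrite !shiftE linear_shiftm // opprD scalerN. Qed.

Lemma ker_shift : ker (shift l T) = ker (shiftm l T).
Proof.
apply/seteqP; split => x; rewrite /ker /= shiftE; last by move=> ->; rewrite oppr0.
by move/eqP; rewrite oppr_eq0 => /eqP.
Qed.

Lemma surj_shift : (forall y, exists x, shift l T x = y) <-> (forall y, exists x, shiftm l T x = y).
Proof.
split=> h y; have [x hx] := h (- y); exists x; last by rewrite shiftE hx opprK.
by apply: oppr_inj; rewrite -shiftE.
Qed.

End Shift.

Lemma bounded_ker_closed (R : realType) (H1 H2 : hilbert R) (S : H1 -> H2) C :
  linear_map S -> 0 <= C -> (forall x, hnorm (S x) <= C * hnorm x) ->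
  closed_norm (@hnorm R H1) (ker S).
Proof.
move=> linS hC hb u z hu hc; apply: sqnorm_eq0; rewrite -sqr_hnorm.
suff -> : hnorm (S z) = 0 by rewrite expr0n.
have h0 := hnorm_ge0 (S z); apply: norm_lt_all_eq0 => e he.
have hd : 0 < e / (C + 1) by rewrite divr_gt0 // ltr_pwDr.
have [K hK] := hc _ hd; have hm := hK K (leqnn K).
have := hb (u K - z); rewrite linear_mapB // hu add0r hnorm_opp => h1.
have h3 : C * hnorm (u K - z) <= C * (e / (C + 1)) by rewrite ler_wpM2l // ltW.
have h4 : C * (e / (C + 1)) < e.
  by rewrite mulrA ltr_pdivrMr ?ltr_pwDr // mulrDr mulr1 [e * C]mulrC ltrDl.
by rewrite ger0_norm //; lra.
Qed.

Lemma bounded_shiftm (R : realType) (H : hilbert R) (D : H -> H) l :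
  bounded_op (@hnorm R H) (@hnorm R H) D ->
  exists2 C, 0 <= C & forall x, hnorm (shiftm l D x) <= C * hnorm x.
Proof.
move=> [linD [K hK]]; set c := complex.Re l ^+ 2 + complex.Im l ^+ 2 + 1.
have hc : 0 <= c by rewrite !addr_ge0 ?sqr_ge0.
exists (`|K| + c) => [|x]; first by rewrite addr_ge0.
apply: le_trans (hnorm_triangle _ _) _; rewrite hnorm_opp mulrDl lerD ?hnormZ_le //.
by apply: le_trans (hK x) _; rewrite ler_wpM2r ?hnorm_ge0 ?ler_norm.
Qed.

Theorem surj_right_invertible (R : realType) (H : hilbert R) (D : H -> H) l :
  bounded_op (@hnorm R H) (@hnorm R H) D ->
  (forall y, exists x, shiftm l D x = y) -> right_invertible (@hnorm R H) (shift l D).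
Proof.
move=> hD hs; have linE := linear_shiftm l hD.1.
split; first by apply/surj_beta_eq0/surj_shift.
rewrite ker_shift; apply: closed_subspace_complemented; first exact: ker_subspace.
by have [C hC hb] := bounded_shiftm l hD; exact: bounded_ker_closed hC hb.
Qed.

(** * Upper triangular operator matrices *)

Section OperatorMatrix.
Variables (R : realType) (n : nat) (X : 'I_n -> hilbert R).
Variables (D : forall k : 'I_n, X k -> X k) (A : forall i j : 'I_n, X j -> X i) (l : R[i]).
Hypothesis linD : forall k : 'I_n, linear_map (@D k).
Hypothesis linA : forall i j : 'I_n, (i < j)%N -> linear_map (@A i j).
Local Notation DS := (dsum X).
Local Notation E k := (shiftm l (@D k)).
Local Notation T := (shiftm l (Tnd D A)).

Lemma dsumD (x y : DS) i : (x + y) i = x i + y i. Proof. by []. Qed.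
Lemma dsumZ a (x : DS) i : (a *: x) i = a *: x i. Proof. by []. Qed.
Lemma dsumB (x y : DS) i : (x - y) i = x i - y i. Proof. by []. Qed.

Lemma dsum_sum k (c : 'I_k -> R[i]) (v : 'I_k -> DS) i :
  (\sum_(t < k) c t *: v t) i = \sum_(t < k) c t *: v t i.
Proof. by elim/big_rec2: _ => // t y1 y2 _ <-. Qed.

Lemma dsum_ext (x y : DS) : (forall i, x i = y i) -> x = y.
Proof. exact: functional_extensionality_dep. Qed.

Lemma ds_norm_coord (x : DS) k : hnorm (x k) <= ds_norm x.
Proof.
rewrite /ds_norm -[hnorm (x k)]ger0_norm ?hnorm_ge0 // -sqrtr_sqr; apply: ler_wsqrtr.
by rewrite (bigD1 k) //= lerDl; apply: sumr_ge0 => i _; exact: sqr_ge0.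
Qed.

Lemma linear_Tnd : linear_map (Tnd D A).
Proof.
move=> a x y; apply: dsum_ext => i; rewrite dsumD dsumZ /Tnd dsumD dsumZ linD.
rewrite scalerDr -!addrA; congr (_ + _); rewrite addrCA; congr (_ + _).
by rewrite scaler_sumr -big_split; apply: eq_bigr => j hj; rewrite dsumD dsumZ linA.
Qed.

Lemma Tnd_shiftm_row (x : DS) (i : 'I_n) :
  T x i = E i (x i) + \sum_(j < n | (i < j)%N) @A i j (x j).
Proof. by rewrite /shiftm dsumB dsumZ /Tnd addrAC. Qed.

Lemma Tnd_shiftm_row_eq (x y : DS) (i : 'I_n) :
  (forall j : 'I_n, (i <= j)%N -> x j = y j) -> T x i = T y i.
Proof.
move=> h; rewrite !Tnd_shiftm_row h //; congr (_ + _).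
by apply: eq_bigr => j hj; rewrite h // ltnW.
Qed.

Section Complements.
Variable M : forall k : 'I_n, set (X k).
Hypothesis subM : forall k : 'I_n, subspace (@M k).
Hypothesis surjE : forall (k : 'I_n) (w : X k), exists v, E k v = w.
Hypothesis decompE : forall (k : 'I_n) (z : X k), exists p q, E k p = 0 /\ @M k q /\ z = p + q.
Hypothesis meetE : forall (k : 'I_n) (z : X k), E k z = 0 -> @M k z -> z = 0.

Definition solves_from (b x : DS) (t : nat) (y : DS) : Prop :=
  forall i : 'I_n, (t <= i)%N -> T y i = b i /\ @M i (x i - y i).

(* Back substitution: choose [y s] with [E s (y s) = b s - (the later entries)],
   adjusted by kernel and [M s] components to match [x s] modulo [M s]. *)
Lemma solves_from_extend b x (s : 'I_n) y : solves_from b x s.+1 y ->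
  exists y', solves_from b x s y'.
Proof.
move=> hy; pose w := b s - \sum_(j < n | (s < j)%N) @A s j (y j).
have [v hv] := surjE w; have [p1 [q1 [hp1 [hq1 hv1]]]] := decompE v.
have [p2 [q2 [hp2 [hq2 hx]]]] := decompE (x s).
have linE := linear_shiftm l (@linD s).
exists (dfwith y (q1 + p2)) => i hi; have [<-|nis] := eqVneq s i.
  split.
    rewrite Tnd_shiftm_row dfwith_in (linear_mapD linE) hp2 addr0.
    rewrite (eq_bigr (fun j => @A s j (y j))); last first.
      by move=> j hj; rewrite dfwith_out // neq_ltn hj.
    have -> : E s q1 = w by rewrite -hv hv1 (linear_mapD linE) hp1 add0r.
    by rewrite subrK.
  have -> : x s - dfwith y (q1 + p2) s = (-1) *: q1 + q2.
    by rewrite dfwith_in scaleN1r hx opprD [p2 + q2]addrC addrACA addrN addr0 addrC.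
  by apply: (subspaceZD (subM s)).
have hsi : (s < i)%N by rewrite ltn_neqAle hi andbT.
have [h1 h2] := hy i hsi; rewrite dfwith_out //; split => //.
rewrite -h1; apply: Tnd_shiftm_row_eq => j hj; rewrite dfwith_out //.
by apply/eqP => hsj; move: hj; rewrite -hsj leqNgt hsi.
Qed.

Lemma Tnd_backsolve b x : exists y, solves_from b x 0 y.
Proof.
suff : forall t, (t <= n)%N -> exists y, solves_from b x (n - t) y.
  by move/(_ n (leqnn n)); rewrite subnn.
elim=> [|t IH] ht; first by exists 0 => i; rewrite subn0 leqNgt ltn_ord.
have hs : (n - t.+1 < n)%N by rewrite subnSK // leq_subr.
have [y hy] := IH (ltnW ht).
by apply: (solves_from_extend (s := Ordinal hs) (y := y)); rewrite /= subnSK.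
Qed.

Lemma Tnd_ker_meet (y : DS) : (forall i, T y i = 0) -> (forall i, @M i (y i)) -> y = 0.
Proof.
move=> hT hM; suff : forall t, (t <= n)%N -> forall i : 'I_n, (n - t <= i)%N -> y i = 0.
  by move/(_ n (leqnn n)) => h; apply: dsum_ext => i; apply: h; rewrite subnn.
elim=> [|t IH] ht j hj; first by move: hj; rewrite subn0 leqNgt ltn_ord.
have [hj'|hj'] := boolP (n - t <= j)%N; first exact: IH (ltnW ht) _ hj'.
apply: meetE (hM j); have := hT j; rewrite Tnd_shiftm_row big1 ?addr0 // => k hk.
by rewrite IH ?(ltnW ht) ?(linear_map0 (linA hk)) //; move: hj hk ht; lia.
Qed.

Lemma Tnd_shiftm_surj b : exists y, T y = b.
Proof.
have [y hy] := Tnd_backsolve b 0; exists y; apply: dsum_ext => i.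
by have [] := hy i (leq0n i).
Qed.

Hypothesis closedM : forall k : 'I_n, closed_norm (@hnorm R (X k)) (@M k).

Lemma Tnd_ker_complemented : complemented (@ds_norm R n X) (ker T).
Proof.
exists [set y : DS | forall k, @M k (y k)]; split; [|split; [|split]].
- split; first by move=> k; exact: subspace0 (subM k).
  by move=> a x y hx hy k; rewrite dsumD dsumZ; exact: (subspaceZD (subM k)) (hx k) (hy k).
- move=> u z hu hcv k; apply: (closedM (u := fun m => u m k)) => [m|e he]; first exact: hu.
  have [N hN] := hcv e he; exists N => m hm.
  by apply: le_lt_trans (hN m hm); rewrite -dsumB; exact: ds_norm_coord.
- by move=> x hx hM; apply: Tnd_ker_meet => // i; rewrite hx.
- move=> x; have [y hy] := Tnd_backsolve 0 x.
  exists y, (x - y); split; last by split; [move=> i; case: (hy i (leq0n i)) | rewrite addrC subrK].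
  by apply: dsum_ext => i; case: (hy i (leq0n i)).
Qed.

End Complements.

Lemma Tnd_right_invertible :
  (forall k, right_invertible (@hnorm R (X k)) (shift l (@D k))) ->
  right_invertible (@ds_norm R n X) (shift l (Tnd D A)).
Proof.
move=> hri.
have surjE k (w : X k) : exists v, E k v = w.
  by apply/surj_shift: w; apply: beta_eq0_surj (linear_shift _ (@linD k)) (hri k).1.
have complE k : complemented (@hnorm R (X k)) (ker (E k)) by rewrite -ker_shift; exact: (hri k).2.
pose M k := projT1 (cid (complE k)).
have [subM [closedM [meetE decompE]]] : (forall k, subspace (M k)) /\
    (forall k, closed_norm (@hnorm R (X k)) (M k)) /\
    (forall k (z : X k), E k z = 0 -> M k z -> z = 0) /\
    (forall k (z : X k), exists p q, E k p = 0 /\ M k q /\ z = p + q).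
  by split; [|split; [|split]] => k; case: (projT2 (cid (complE k))) => [? [? [? ?]]].
split; first by apply/surj_beta_eq0/surj_shift; apply: (Tnd_shiftm_surj (M := M)).
by rewrite ker_shift; apply: (Tnd_ker_complemented (M := M)).
Qed.

End OperatorMatrix.

Section DefectCount.
Variables (R : realType) (n : nat) (X : 'I_n -> hilbert R).
Variables (D : forall k : 'I_n, X k -> X k) (A : forall i j : 'I_n, X j -> X i) (l : R[i]).
Hypothesis linD : forall k : 'I_n, linear_map (@D k).
Hypothesis linA : forall i j : 'I_n, (i < j)%N -> linear_map (@A i j).
Local Notation DS := (dsum X).
Local Notation E k := (shiftm l (@D k)).
Local Notation T := (shiftm l (Tnd D A)).
Hypothesis surjT : forall b : DS, exists y, T y = b.

Lemma Tnd_surj_last (k : 'I_n) : (n <= k.+1)%N -> forall z : X k, exists v, E k v = z.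
Proof.
move=> hk z; have [y hy] := surjT (dfwith (0 : DS) z); exists (y k).
have := Tnd_shiftm_row D A l y k; rewrite hy dfwith_in big1 ?addr0 // => j hj.
by move: hj (ltn_ord j) hk; lia.
Qed.

Variables (k : 'I_n) (a : 'I_n -> nat).
Hypothesis alpha_le : forall s : 'I_n, (k < s)%N -> ~ dim_ge (ker (E s)) (a s).+1.

Definition tail_sol (t : nat) : set DS :=
  [set w | (forall j : 'I_n, (j <= k)%N || (t <= j)%N -> w j = 0) /\
           (forall j : 'I_n, (k < j)%N -> T w j = 0)].

Lemma tail_sol_subspace t : subspace (tail_sol t).
Proof.
have linT := linear_shiftm l (linear_Tnd linD linA).
split; first by split => j _ //; rewrite (linear_map0 linT).
move=> c x y [hx1 hx2] [hy1 hy2]; split => j hj.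
  by rewrite dsumD dsumZ hx1 // hy1 // scaler0 addr0.
by rewrite linT dsumD dsumZ hx2 // hy2 // scaler0 addr0.
Qed.

Lemma tail_sol_step (s : 'I_n) m : (k < s)%N ->
  dim_ge (tail_sol s.+1) m -> dim_ge (tail_sol s) (m - a s).
Proof.
move=> hks hdim.
have hQ w : tail_sol s.+1 w -> ker (E s) (w s).
  move=> [h1 h2]; have := h2 s hks; rewrite Tnd_shiftm_row big1 ?addr0 // => j hj.
  by rewrite h1 ?(linear_map0 (linA hj)) // hj orbT.
have := dim_ge_meet_ker (tail_sol_subspace _) (fun _ _ _ => erefl) hQ (alpha_le hks) hdim.
apply: dim_ge_sub => w [[h1 h2] /= hw]; split => // j /orP [hj|hj]; first by rewrite h1 ?hj.
by have [->|nej] := eqVneq j s; [|rewrite h1 // ltn_neqAle hj eq_sym nej orbT].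
Qed.

Lemma dim_tail_sol_le d m : (k.+1 + d <= n)%N -> dim_ge (tail_sol (k.+1 + d)) m ->
  (m <= \sum_(s < n | (k < s < k.+1 + d)%N) a s)%N.
Proof.
elim: d m => [|d IH] m hd hdim.
  case: m hdim => // m /dim_geS_nonzero [w [h1 _]] /eqP[].
  by apply: dsum_ext => j; apply: h1; rewrite addn0; case: leqP.
have hs : (k.+1 + d < n)%N by rewrite -addnS.
have hks : (k < Ordinal hs)%N by rewrite /= addSn ltnS leq_addr.
have := tail_sol_step hks; rewrite /= -addnS => /(_ _ hdim) /(IH _ (ltnW hs)) hIH.
rewrite (bigD1 (Ordinal hs)) /=; last by rewrite hks addnS ltnSn.
rewrite (eq_bigl (fun i : 'I_n => (k < i < k.+1 + d)%N)).
  by move: hIH; set S := \sum_(_ < n | _) _; lia.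
move=> i; rewrite -val_eqE /= addnS ltnS [(i <= _)%N]leq_eqVlt.
by case: (ltngtP i (k.+1 + d)); rewrite ?andbF ?andbT ?orbF.
Qed.

Definition tail_part (y : DS) : DS := fun j => if (k < j)%N then y j else 0.

Lemma tail_part_sol y : (forall j : 'I_n, (k < j)%N -> T y j = 0) -> tail_sol n (tail_part y).
Proof.
move=> hy; split => j.
  by case/orP => hj; rewrite /tail_part ?ifN -?leqNgt //; move: (ltn_ord j) hj; lia.
move=> hj; rewrite -(hy j hj); apply: Tnd_shiftm_row_eq => i hi.
by rewrite /tail_part ifT //; apply: leq_trans hj hi.
Qed.

Lemma tail_part_eq0_range y : tail_part y = 0 -> Defs.range (E k) (T y k).
Proof.
move=> hy; exists (y k); rewrite Tnd_shiftm_row big1 ?addr0 // => j hj.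
have := congr1 (fun f : DS => f j) hy; rewrite /tail_part /= hj => ->.
exact: linear_map0 (linA hj).
Qed.

(* Lifting vectors independent modulo [R(D_k - l)] through the surjection [T]
   gives independent tail solutions. *)
Lemma codim_range_le : ~ codim_ge (Defs.range (E k)) (\sum_(s < n | (k < s)%N) a s).+1.
Proof.
set N := \sum_(s < n | (k < s)%N) a s; move=> [v hv].
have [y hy] := choice (fun i : 'I_N.+1 => surjT (dfwith (0 : DS) (v i))).
have linT := linear_shiftm l (linear_Tnd linD linA).
have tail i : tail_sol n (tail_part (y i)).
  by apply: tail_part_sol => j hj; rewrite hy dfwith_out // neq_ltn hj.
have indep : indep_mod [set 0] (fun i => tail_part (y i)).
  move=> c hc; apply: hv.
  have -> : \sum_(i < N.+1) c i *: v i = T (\sum_(i < N.+1) c i *: y i) k.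
    by rewrite linear_map_sum // dsum_sum; apply: eq_bigr => i _; rewrite hy dfwith_in.
  apply: tail_part_eq0_range; apply: dsum_ext => j; rewrite /tail_part; case: ifP => hj //.
  have := congr1 (fun f : DS => f j) hc; rewrite /= !dsum_sum => <-.
  by apply: eq_bigr => i _; rewrite /tail_part hj.
have := @dim_tail_sol_le (n - k.+1) N.+1; rewrite subnKC ?ltn_ord //.
have -> : \sum_(s < n | (k < s < n)%N) a s = N by apply: eq_bigl => s; rewrite ltn_ord andbT.
by move=> /(_ (leqnn n) (ex_intro _ _ (conj tail indep))); rewrite ltnn.
Qed.

End DefectCount.

Section RightSpectrum.
Variables (R : realType) (n : nat) (X : 'I_n -> hilbert R).
Variables (D : forall k : 'I_n, X k -> X k) (A : forall i j : 'I_n, X j -> X i).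
Hypothesis boundedD : forall k : 'I_n, bounded_op (@hnorm R (X k)) (@hnorm R (X k)) (@D k).
Hypothesis linA : forall i j : 'I_n, (i < j)%N -> linear_map (@A i j).

Let linD k : linear_map (@D k) := (boundedD k).1.

Lemma sigma_r_Tnd_diag l : sigma_r (@ds_norm R n X) (Tnd D A) l ->
  exists k : 'I_n, sigma_r (@hnorm R (X k)) (@D k) l.
Proof.
move=> hT; apply/not_notP => hD; apply/hT/Tnd_right_invertible => // k.
by apply/not_notP => hk; apply: hD; exists k.
Qed.

Lemma sigma_r_diag_notin_Tnd l (k : 'I_n) :
  sigma_r (@hnorm R (X k)) (@D k) l -> ~ sigma_r (@ds_norm R n X) (Tnd D A) l ->
  (k.+1 < n)%N /\
  ele (beta (shiftm l (@D k))) (\big[eadd/Some 0%N]_(s < n | (k < s)%N) alpha (shiftm l (@D s))).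
Proof.
move=> hk hT; have [hbeta _] : right_invertible (@ds_norm R n X) (shift l (Tnd D A)).
  exact/not_notP.
have surjT b : exists y, shiftm l (Tnd D A) y = b.
  by apply/surj_shift: b; apply: beta_eq0_surj hbeta; apply/linear_shift/linear_Tnd.
split.
  rewrite ltnNge; apply/negP => hlast; apply/hk/surj_right_invertible => //.
  exact: Tnd_surj_last surjT _ hlast.
have [[s [hs hinf]]|hfin] := pselect (exists s : 'I_n, (k < s)%N /\ alpha (shiftm l (@D s)) = None).
  by rewrite (big_eadd_None (mem_index_enum s) hs hinf); case: beta.
pose a s := odflt 0%N (alpha (shiftm l (@D s))).
have ha (s : 'I_n) : (k < s)%N -> alpha (shiftm l (@D s)) = Some (a s).
  move=> hs; rewrite /a; case e: (alpha _) => [x|] //.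
  by case: hfin; exists s.
rewrite (big_eadd_Some _ ha); apply: enat_of_le; first exact: (@codim_ge_le _ _ _).
apply: (codim_range_le linD linA surjT) => s hs; exact: alpha_Some_dim (ha s hs).
Qed.

End RightSpectrum.

Theorem mainTheorem14 (R : realType) (n : nat) (X : 'I_n -> hilbert R)
    (D : forall k : 'I_n, X k -> X k) :
  (2 <= n)%N ->
  (forall k, infinite_dim (X k)) ->
  (forall k, bounded_op (@hnorm R (X k)) (@hnorm R (X k)) (D k)) ->
  let Delta : set R[i] :=
    [set l | exists k : 'I_n, (k.+1 < n)%N /\ sigma_r (@hnorm R (X k)) (D k) l /\
       ele (beta (shiftm l (D k)))
           (\big[eadd/Some 0%N]_(s < n | (k < s)%N) alpha (shiftm l (D s)))] in
  forall A : forall i j : 'I_n, X j -> X i,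
    (forall i j : 'I_n, (i < j)%N -> bounded_op (@hnorm R (X j)) (@hnorm R (X i)) (A i j)) ->
    [set l | exists k : 'I_n, sigma_r (@hnorm R (X k)) (D k) l]
      = sigma_r (@ds_norm R n X) (Tnd D A) `|` Delta
    /\ (Delta = set0 ->
        [set l | exists k : 'I_n, sigma_r (@hnorm R (X k)) (D k) l]
          = sigma_r (@ds_norm R n X) (Tnd D A)).
Proof.
move=> _ _ boundedD Delta A boundedA.
have linA (i j : 'I_n) (hij : (i < j)%N) : linear_map (A i j) := (boundedA i j hij).1.
suff union_eq : [set l | exists k : 'I_n, sigma_r (@hnorm R (X k)) (D k) l]
    = sigma_r (@ds_norm R n X) (Tnd D A) `|` Delta.
  by split => // Delta0; rewrite union_eq Delta0 setU0.
apply/seteqP; split => l.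
  move=> [k hk]; have [hT|hT] := pselect (sigma_r (@ds_norm R n X) (Tnd D A) l); first by left.
  by right; have [hkn hle] := sigma_r_diag_notin_Tnd boundedD linA hk hT; exists k.
by case=> [/(sigma_r_Tnd_diag boundedD linA)|[k [_ [hk _]]]] //; exists k.
Qed.
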